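(* For all integers $n,k\ge 0$ we have $F_{n,k}\in\{0,1\}$; that is, $F$ is a $0$-$1$ matrix.
   Context: Define maps $G,S:\mathbb Z^2\to\mathbb Z^2$ by $G(x,y)=(x+y,y)$ and $S(x,y)=(3x-2y+1,\,2x-y+1)$. Define the array $(F_{n,k})_{n,k\ge 0}$ by $F_{0,0}=1$ and, for $(n,k)\neq(0,0)$, $F_{n,k}$ is the number of finite words $w=w_1w_2\cdots w_m$ ($m\ge 0$) over the alphabet $\{G,S\}$ with $w_1\circ w_2\circ\cdots\circ w_m(1,1)=(n,k)$ (the empty word acts as the identity). Equivalently: start with all entries $0$, set $F_{0,0}=1$ and $F_{1,1}=1$, and thereafter, whenever an entry $F_{n,k}$ with $n\ge 1$ changes its value, increase $F_{n+k,k}$ and $F_{3n+1-2k,\,2n+1-k}$ by $1$. *)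

From Stdlib Require Import ZArith List Arith.
Import ListNotations.
Open Scope Z_scope.

Definition G (p : Z * Z) : Z * Z := (fst p + snd p, snd p).
Definition S (p : Z * Z) : Z * Z :=
  (3 * fst p - 2 * snd p + 1, 2 * fst p - snd p + 1).

Definition act (a : bool) (p : Z * Z) : Z * Z := if a then G p else S p.

(* w = w_1 w_2 ... w_m acts as w_1 o w_2 o ... o w_m (w_m applied first). *)
Definition eval_word (w : list bool) (p : Z * Z) : Z * Z :=
  fold_right act p w.

Fixpoint words (m : nat) : list (list bool) :=
  match m with
  | O => [ [] ]
  | Datatypes.S m' => map (cons true) (words m') ++ map (cons false) (words m')
  end.

Definition pair_eqb (p q : Z * Z) : bool :=
  Z.eqb (fst p) (fst q) && Z.eqb (snd p) (snd q).

Definition count_len (m : nat) (n k : nat) : nat :=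
  length (filter (fun w => pair_eqb (eval_word w (1, 1)) (Z.of_nat n, Z.of_nat k))
                 (words m)).

(* Truncated version of F_{n,k}: words of length <= L only.
   F_{n,k} is the (possibly infinite) limit of F_upto L n k as L -> oo,
   which is nondecreasing in L. F_{0,0} = 1 by convention. *)
Definition F_upto (L : nat) (n k : nat) : nat :=
  if (Nat.eqb n 0 && Nat.eqb k 0)%bool then 1%nat
  else fold_right Nat.add 0%nat (map (fun m => count_len m n k) (seq 0 (Datatypes.S L))).

(** The points reachable from (1,1) lie in the sector 1 <= y <= x, on which
    G and S are injective with disjoint images: G lands where x >= 2y and S
    where x < 2y. Both maps also increase x + y, so (1,1) is reached only by
    the empty word. Hence a word is determined by the point it sends (1,1) to,
    and F_{n,k} <= 1. Moreover a word reaching (n,k) has length at most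
    n + k - 2, so the truncated counts F_upto L n k are constant from
    L = n + k on. *)

From Stdlib Require Import ZArith List Arith Lia.
Import ListNotations.

Definition in_sector (p : Z * Z) : Prop := (1 <= snd p <= fst p)%Z.

Definition size (p : Z * Z) : Z := (fst p + snd p)%Z.

Lemma act_in_sector (a : bool) (p : Z * Z) :
  in_sector p -> in_sector (act a p) /\ (size p < size (act a p))%Z.
Proof.
  destruct p as [x y]; unfold in_sector, size; cbn [fst snd].
  destruct a; unfold act, G, S; cbn [fst snd]; lia.
Qed.

Lemma eval_word_cons (a : bool) (w : list bool) (p : Z * Z) :
  eval_word (a :: w) p = act a (eval_word w p).
Proof. reflexivity. Qed.

Lemma eval_word_in_sector (w : list bool) (p : Z * Z) :
  in_sector p ->
  in_sector (eval_word w p) /\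
  (size p + Z.of_nat (length w) <= size (eval_word w p))%Z.
Proof.
  intros Hp; induction w as [|a w [Hw Hsize]].
  - cbn; split; [exact Hp | lia].
  - rewrite eval_word_cons, length_cons, Nat2Z.inj_succ.
    destruct (act_in_sector a _ Hw) as [Haw Hgrow].
    split; [exact Haw | lia].
Qed.

Lemma act_cancel (a b : bool) (p q : Z * Z) :
  in_sector p -> in_sector q -> act a p = act b q -> a = b /\ p = q.
Proof.
  destruct p as [x y], q as [x' y']; unfold in_sector; cbn [fst snd].
  intros Hp Hq H; destruct a, b; unfold act, G, S in H; cbn [fst snd] in H.
  all: apply pair_equal_spec in H as [Hx Hy].
  all: first [split; [reflexivity | f_equal; lia] | lia].
Qed.

Lemma eval_word_inj (p : Z * Z) (w1 w2 : list bool) :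
  in_sector p -> eval_word w1 p = eval_word w2 p -> w1 = w2.
Proof.
  intros Hp; revert w2.
  assert (Hfixed : forall w, eval_word w p = p -> w = []).
  { intros [|a w] Hw; [reflexivity | exfalso].
    destruct (eval_word_in_sector (a :: w) p Hp) as [_ Hsize].
    rewrite Hw in Hsize; cbn [length] in Hsize; lia. }
  induction w1 as [|a u IH]; intros [|b v] H.
  - reflexivity.
  - symmetry; exact (Hfixed _ (eq_sym H)).
  - exact (Hfixed _ H).
  - destruct (act_cancel a b _ _ (proj1 (eval_word_in_sector u p Hp))
                (proj1 (eval_word_in_sector v p Hp)) H) as [-> Huv].
    f_equal; exact (IH v Huv).
Qed.

Lemma pair_eqb_eq (p q : Z * Z) : pair_eqb p q = true <-> p = q.
Proof.
  destruct p as [a b], q as [c d]; unfold pair_eqb; cbn.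
  rewrite Bool.andb_true_iff, !Z.eqb_eq.
  split; [intros [-> ->] | intros H; injection H]; auto.
Qed.

Local Open Scope nat_scope.

Lemma in_words (m : nat) (w : list bool) : In w (words m) <-> length w = m.
Proof.
  revert w; induction m as [|m IH]; intros w; cbn [words].
  - destruct w; cbn; intuition congruence.
  - rewrite in_app_iff, !in_map_iff; split.
    + intros [[v [<- Hv]] | [v [<- Hv]]]; cbn; f_equal; apply IH; exact Hv.
    + destruct w as [|b v]; cbn; intros Hw; [discriminate |].
      injection Hw as Hv; apply IH in Hv.
      destruct b; [left | right]; exists v; exact (conj eq_refl Hv).
Qed.

Lemma NoDup_words (m : nat) : NoDup (words m).
Proof.
  assert (Hcons : forall (b : bool) l, NoDup l -> NoDup (map (cons b) l)).
  { intros b l; apply NoDup_map_NoDup_ForallPairs.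
    intros u v _ _ H; injection H as H; exact H. }
  induction m as [|m IH]; cbn [words].
  - repeat constructor; intros [].
  - apply NoDup_app; [apply Hcons, IH | apply Hcons, IH |].
    intros w Ht Hf.
    apply in_map_iff in Ht as [u [<- _]], Hf as [v [Hv _]]; discriminate Hv.
Qed.

Lemma NoDup_flat_map_words (ms : list nat) :
  NoDup ms -> NoDup (flat_map words ms).
Proof.
  induction 1 as [|m ms Hm _ IH]; cbn [flat_map]; [constructor |].
  apply NoDup_app; [apply NoDup_words | exact IH |].
  intros w Hw Hin; apply in_flat_map in Hin as [m' [Hm' Hw']].
  apply in_words in Hw, Hw'; apply Hm; congruence.
Qed.

Lemma NoDup_length_le_1 {A : Type} (l : list A) :
  NoDup l -> (forall x y, In x l -> In y l -> x = y) -> length l <= 1.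
Proof.
  intros Hl Hall; destruct l as [|x [|y l]]; cbn; [lia | lia | exfalso].
  inversion_clear Hl as [|? ? Hx _]; apply Hx.
  rewrite (Hall x y) by (cbn; auto); left; reflexivity.
Qed.

Definition reaches (n k : nat) (w : list bool) : bool :=
  pair_eqb (eval_word w (1, 1)%Z) (Z.of_nat n, Z.of_nat k).

Definition count_upto (L n k : nat) : nat :=
  list_sum (map (fun m => count_len m n k) (seq 0 (Datatypes.S L))).

Lemma in_sector_start : in_sector (1, 1)%Z.
Proof. unfold in_sector; cbn; lia. Qed.

Lemma reaches_length (n k : nat) (w : list bool) :
  reaches n k w = true -> length w + 2 <= n + k.
Proof.
  unfold reaches; rewrite pair_eqb_eq; intros Hw.
  destruct (eval_word_in_sector w _ in_sector_start) as [_ Hsize].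
  rewrite Hw in Hsize; unfold size in Hsize; cbn [fst snd] in Hsize; lia.
Qed.

Lemma count_len_long (m n k : nat) : n + k < m + 2 -> count_len m n k = 0.
Proof.
  intros Hm; unfold count_len.
  rewrite (filter_ext_in _ (fun _ => false)), filter_false; [reflexivity |].
  intros w Hw; apply in_words in Hw; change (reaches n k w = false).
  destruct (reaches n k w) eqn:Hreach; [exfalso | reflexivity].
  apply reaches_length in Hreach; lia.
Qed.

Lemma count_upto_stable (L n k : nat) :
  n + k <= L -> count_upto L n k = count_upto (n + k) n k.
Proof.
  induction 1 as [|L HL IH]; [reflexivity |].
  unfold count_upto in *.
  rewrite (seq_S (Datatypes.S L)), map_app, list_sum_app, IH.
  cbn [map list_sum fold_right].
  rewrite count_len_long by lia; lia.
Qed.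

Lemma count_upto_filter (L n k : nat) :
  count_upto L n k =
  length (filter (reaches n k) (flat_map words (seq 0 (Datatypes.S L)))).
Proof.
  unfold count_upto; induction (seq 0 (Datatypes.S L)) as [|m ms IH]; [reflexivity |].
  cbn [map flat_map list_sum fold_right].
  rewrite filter_app, length_app, <- IH; reflexivity.
Qed.

Lemma count_upto_le_1 (L n k : nat) : count_upto L n k <= 1.
Proof.
  rewrite count_upto_filter; apply NoDup_length_le_1.
  - apply NoDup_filter, NoDup_flat_map_words, seq_NoDup.
  - intros u v Hu Hv.
    apply filter_In in Hu as [_ Hu], Hv as [_ Hv]; unfold reaches in Hu, Hv.
    rewrite pair_eqb_eq in Hu, Hv.
    apply (eval_word_inj _ _ _ in_sector_start); congruence.
Qed.

Theorem corollary5 : forall n k : nat,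
  exists b : nat, (b <= 1)%nat /\
    exists L0 : nat, forall L : nat, (L0 <= L)%nat -> F_upto L n k = b.
Proof.
  intros n k; unfold F_upto.
  destruct (Nat.eqb n 0 && Nat.eqb k 0)%bool.
  - exists 1; split; [reflexivity | exists 0; reflexivity].
  - exists (count_upto (n + k) n k); split; [apply count_upto_le_1 |].
    exists (n + k); exact (fun L HL => count_upto_stable L n k HL).
Qed.
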